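(* Let $\Omega$ be a finite-dimensional real Euclidean space and $f_1,\dots,f_N\colon\Omega\to\mathbb{R}$ continuous convex functions (not assumed strongly convex) such that $E=\frac1N\sum_{j=1}^N f_j$ is coercive, and let $\theta^*$ be a minimizer of $E$. For $\alpha>0$ let $f_j^\alpha(\theta)=f_j(\theta)+\frac\alpha2\|\theta\|^2$ and $E^\alpha=\frac1N\sum_j f_j^\alpha$. Run DualFL (described in the context) on the functions $f_1^\alpha,\dots,f_N^\alpha$ with hyperparameters $\rho=0$ and $\nu=\alpha$, and suppose that for some $\gamma>0$ the local iterates satisfy $\Gamma^{n,j}(\theta_j^{(n+1)})\le\frac{1}{N\nu(n+1)^{4+\gamma}}$ for all $1\le j\le N$, $n\ge0$. Then the generated sequence $\{\theta^{(n)}\}$ (which depends on $\alpha$) satisfies \[ E(\theta^{(n)})-E(\theta^* )\to0\quad\text{as } n\to\infty \text{ and } \alpha\to0^+ . \]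
   Context: $h^*$ denotes the Legendre--Fenchel conjugate. DualFL applied to convex functions $\tilde f_1,\dots,\tilde f_N$ (here $\tilde f_j=f_j^\alpha$) with hyperparameters $\rho\ge0$, $\nu>0$: set $\theta^{(0)}=\theta_j^{(0)}=0$, $\zeta_j^{(0)}=\zeta_j^{(-1)}=0$, $t_0=1$. For $n=0,1,\dots$: each client $j$ computes an approximate minimizer $\theta_j^{(n+1)}$ of $E^{n,j}(\theta)=\tilde f_j(\theta)-\nu\langle\zeta_j^{(n)},\theta\rangle$; $\theta^{(n+1)}=\frac1N\sum_j\theta_j^{(n+1)}$; $t_{n+1}=\frac{1-\rho t_n^2+\sqrt{(1-\rho t_n^2)^2+4t_n^2}}{2}$, $\beta_n=\frac{t_n-1}{t_{n+1}}\cdot\frac{1-t_{n+1}\rho}{1-\rho}$; $\zeta_j^{(n+1)}=(1+\beta_n)(\zeta_j^{(n)}+\theta^{(n+1)}-\theta_j^{(n+1)})-\beta_n(\zeta_j^{(n-1)}+\theta^{(n)}-\theta_j^{(n)})$. Primal-dual gap: $g_j=\tilde f_j-\frac\nu2\|\cdot\|^2$, $E^{n,j}_{\mathrm d}(\xi)=g_j^*(\xi)+\frac1{2\nu}\|\xi-\nu\zeta_j^{(n)}\|^2$, $\Gamma^{n,j}(\theta)=E^{n,j}(\theta)+E^{n,j}_{\mathrm d}(\nu(\zeta_j^{(n)}-\theta))$. *)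

From HB Require Import structures.
From mathcomp Require Import all_boot all_order all_algebra.
From mathcomp Require Import all_classical all_reals all_analysis.
Set Implicit Arguments. Unset Strict Implicit. Unset Printing Implicit Defensive.
Import Order.TTheory GRing.Theory Num.Theory.
Import numFieldNormedType.Exports.
Local Open Scope classical_set_scope.
Local Open Scope ring_scope.

Section DualFL.
Variables (R : realType) (d N : nat).
Local Notation vec := 'rV[R]_d.

Definition dot (u v : vec) : R := \sum_(i < d) u ord0 i * v ord0 i.
Definition sqn (u : vec) : R := dot u u.

Definition convex_fun (f : vec -> R) : Prop :=
  forall (x y : vec) (t : R), 0 <= t <= 1 ->
    f (t *: x + (1 - t) *: y) <= t * f x + (1 - t) * f y.

Definition coercive (f : vec -> R) : Prop :=
  forall M : R, exists r : R, forall x : vec, r <= sqn x -> M <= f x.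

Definition avgf (f : 'I_N -> vec -> R) (x : vec) : R :=
  N%:R^-1 * \sum_(j < N) f j x.
Definition avgv (v : 'I_N -> vec) : vec := N%:R^-1 *: \sum_(j < N) v j.

Definition conj (g : vec -> R) (xi : vec) : \bar R :=
  ereal_sup [set (dot xi x - g x)%:E | x in [set: vec]].

Fixpoint tseq (rho : R) (n : nat) : R :=
  match n with
  | 0 => 1
  | m.+1 => let t := tseq rho m in
      (1 - rho * t ^+ 2 + Num.sqrt ((1 - rho * t ^+ 2) ^+ 2 + 4 * t ^+ 2)) / 2
  end.
Definition beta (rho : R) (n : nat) : R :=
  (tseq rho n - 1) / tseq rho n.+1 * ((1 - tseq rho n.+1 * rho) / (1 - rho)).

(* zeta_j^{(n-1)}, with zeta_j^{(-1)} = 0 *)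
Definition zprev (ze : nat -> 'I_N -> vec) (n : nat) (j : 'I_N) : vec :=
  if n is m.+1 then ze m j else 0.

(* (th, ze) is a DualFL run for ft (= tilde f) with hyperparameters rho, nu:
   th n j = theta_j^{(n)}, ze n j = zeta_j^{(n)}, theta^{(n)} = avgv (th n).
   The local iterates th n.+1 j are arbitrary (approximate minimizers); their
   accuracy is constrained separately through the primal-dual gap. *)
Definition dualfl_run (rho : R) (th ze : nat -> 'I_N -> vec) : Prop :=
  (forall j, th 0%N j = 0) /\ (forall j, ze 0%N j = 0) /\
  forall (n : nat) (j : 'I_N),
    ze n.+1 j = (1 + beta rho n) *: (ze n j + avgv (th n.+1) - th n.+1 j)
                - beta rho n *: (zprev ze n j + avgv (th n) - th n j).

Definition Eloc (ft : 'I_N -> vec -> R) (nu : R) (z : vec) (j : 'I_N)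
  (x : vec) : R := ft j x - nu * dot z x.
Definition gfun (ft : 'I_N -> vec -> R) (nu : R) (j : 'I_N) (x : vec) : R :=
  ft j x - nu / 2 * sqn x.
Definition Edual (ft : 'I_N -> vec -> R) (nu : R) (z : vec) (j : 'I_N)
  (xi : vec) : \bar R :=
  (conj (gfun ft nu j) xi + ((2 * nu)^-1 * sqn (xi - nu *: z))%:E)%E.
Definition Gap (ft : 'I_N -> vec -> R) (nu : R) (z : vec) (j : 'I_N)
  (x : vec) : \bar R :=
  ((Eloc ft nu z j x)%:E + Edual ft nu z j (nu *: (z - x)))%E.

End DualFL.

(* With [nu = alpha] and [rho = 0], DualFL is an inexact FISTA on the dual of
   the consensus problem min sum_j f_j^alpha(theta_j) s.t. theta_1 = ... =
   theta_N: minimize H(mu) = sum_j (f_j^alpha)^*(alpha mu_j) over N x d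
   matrices mu whose rows sum to zero.  The gap bound gives f_j^alpha a
   quadratic minorant at theta_j^(n+1), which is exactly an inexact descent
   step for H with error N delta_n (delta_n the gap tolerance), and
   sum_n t_n^2 N delta_n <= 2 / alpha.
   Comparing in the FISTA Lyapunov estimate with near-optimal feasible points,
   which are bounded because H controls every entry of mu, keeps the dual
   iterates bounded, so the consensus deviations theta_j^(n+1) - theta^(n+1)
   tend to 0.  Weak duality bounds sum_j f_j^alpha(theta_j^(n+1)) by
   sum_j f_j^alpha(theta^* ) plus a vanishing residual; the local iterates stay
   in a ball, where the convex, bounded f_j^alpha vary little, so the bound
   passes to the average theta^(n+1).  Finally f_j^alpha - f_j costs at most
   alpha |theta^*|^2 / 2. *)

From HB Require Import structures.
From mathcomp Require Import all_boot all_order all_algebra.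
From mathcomp Require Import all_classical all_reals all_analysis.
From mathcomp Require Import ring lra.
Set Implicit Arguments. Unset Strict Implicit. Unset Printing Implicit Defensive.
Import Order.TTheory GRing.Theory Num.Theory.
Import numFieldNormedType.Exports.
Local Open Scope classical_set_scope.
Local Open Scope ring_scope.

Section FrobeniusInnerProduct.
Variable R : realType.

Definition mdot m n (A B : 'M[R]_(m, n)) : R :=
  \sum_(i < m) \sum_(j < n) A i j * B i j.
Definition msq m n (A : 'M[R]_(m, n)) : R := mdot A A.

Variables m n : nat.
Implicit Types A B C : 'M[R]_(m, n).

Lemma mdotC A B : mdot A B = mdot B A.
Proof. by apply: eq_bigr => i _; apply: eq_bigr => j _; rewrite mulrC. Qed.

Lemma mdotDl A B C : mdot (A + B) C = mdot A C + mdot B C.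
Proof.
rewrite /mdot -big_split; apply: eq_bigr => i _.
by rewrite -big_split; apply: eq_bigr => j _; rewrite mxE mulrDl.
Qed.

Lemma mdotZl a A B : mdot (a *: A) B = a * mdot A B.
Proof.
rewrite /mdot mulr_sumr; apply: eq_bigr => i _.
by rewrite mulr_sumr; apply: eq_bigr => j _; rewrite mxE mulrA.
Qed.

Lemma mdotNl A B : mdot (- A) B = - mdot A B.
Proof. by rewrite -scaleN1r mdotZl mulN1r. Qed.

Lemma mdotBl A B C : mdot (A - B) C = mdot A C - mdot B C.
Proof. by rewrite mdotDl mdotNl. Qed.

Lemma mdotDr A B C : mdot A (B + C) = mdot A B + mdot A C.
Proof. by rewrite mdotC mdotDl !(mdotC A). Qed.

Lemma mdotZr a A B : mdot A (a *: B) = a * mdot A B.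
Proof. by rewrite mdotC mdotZl mdotC. Qed.

Lemma mdotNr A B : mdot A (- B) = - mdot A B.
Proof. by rewrite mdotC mdotNl mdotC. Qed.

Lemma mdotBr A B C : mdot A (B - C) = mdot A B - mdot A C.
Proof. by rewrite mdotDr mdotNr. Qed.

Lemma mdot0l A : mdot 0 A = 0.
Proof. by rewrite -(scale0r 0) mdotZl mul0r. Qed.

Lemma mdot0r A : mdot A 0 = 0.
Proof. by rewrite mdotC mdot0l. Qed.

Lemma msq_ge0 A : 0 <= msq A.
Proof. by apply: sumr_ge0 => i _; apply: sumr_ge0 => j _; apply: sqr_ge0. Qed.

Lemma msq0 : msq (0 : 'M[R]_(m, n)) = 0.
Proof. exact: mdot0l. Qed.

Lemma msqD A B : msq (A + B) = msq A + 2 * mdot A B + msq B.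
Proof. by rewrite /msq !mdotDl !mdotDr (mdotC B A); ring. Qed.

Lemma msqB A B : msq (A - B) = msq A - 2 * mdot A B + msq B.
Proof. by rewrite /msq !mdotBl !mdotBr (mdotC B A); ring. Qed.

Lemma msqZ a A : msq (a *: A) = a ^+ 2 * msq A.
Proof. by rewrite /msq mdotZl mdotZr; ring. Qed.

Lemma msqN A : msq (- A) = msq A.
Proof. by rewrite /msq mdotNl mdotNr opprK. Qed.

Lemma young_mdot c A B : 0 < c -> 2 * mdot A B <= c * msq A + c^-1 * msq B.
Proof.
move=> c_gt0; rewrite -subr_ge0.
have -> : c * msq A + c^-1 * msq B - 2 * mdot A B = c^-1 * msq (c *: A - B).
  by rewrite msqB msqZ mdotZl; field; rewrite gt_eqF.
by rewrite mulr_ge0 ?msq_ge0 ?invr_ge0 ?ltW.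
Qed.

Lemma msqD_le A B : msq (A + B) <= 2 * msq A + 2 * msq B.
Proof. by rewrite msqD; have := young_mdot A B ltr01; rewrite invr1; lra. Qed.

Lemma msqB_le A B : msq (A - B) <= 2 * msq A + 2 * msq B.
Proof. by have := msqD_le A (- B); rewrite msqN. Qed.

Lemma msq_convex s A B : 0 <= s <= 1 ->
  msq (s *: A + (1 - s) *: B) <= s * msq A + (1 - s) * msq B.
Proof.
move=> /andP[s_ge0 s_le1]; rewrite -subr_ge0.
have -> : s * msq A + (1 - s) * msq B - msq (s *: A + (1 - s) *: B) =
    s * (1 - s) * msq (A - B).
  by rewrite (msqD (s *: A)) !msqZ msqB mdotZl mdotZr; ring.
by rewrite mulr_ge0 ?msq_ge0 ?mulr_ge0 ?subr_ge0.
Qed.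

End FrobeniusInnerProduct.

Lemma dotE (R : realType) d (u v : 'rV[R]_d) : dot u v = mdot u v.
Proof. by rewrite /dot /mdot big_ord1. Qed.

Lemma sqnE (R : realType) d (u : 'rV[R]_d) : sqn u = msq u.
Proof. by rewrite /sqn dotE. Qed.

Lemma mdot_rows (R : realType) N d (A B : 'M[R]_(N, d)) :
  mdot A B = \sum_(j < N) mdot (row j A) (row j B).
Proof.
apply: eq_bigr => j _; rewrite /mdot big_ord1.
by apply: eq_bigr => i _; rewrite !mxE.
Qed.

Lemma mdot_suml (R : realType) m n (I : finType) (F : I -> 'M[R]_(m, n)) B :
  mdot (\sum_i F i) B = \sum_i mdot (F i) B.
Proof.
by apply: (big_morph (fun A => mdot A B)) => [A C|]; [exact: mdotDl|exact: mdot0l].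
Qed.

Lemma ler_sum_term (R : numDomainType) (I : finType) (F : I -> R) k :
  (forall i, 0 <= F i) -> F k <= \sum_i F i.
Proof. by move=> F_ge0; rewrite (bigD1 k) //= lerDl sumr_ge0. Qed.

Section InexactFista.
Variables (R : realType) (m n : nat).
Local Notation V := 'M[R]_(m, n).
Variables (feasible : V -> Prop) (H : V -> R) (x y : nat -> V) (t e : nat -> R).
Variables (a : R) (l : V).
Hypotheses (t0 : t 0 = 1) (t_ge1 : forall k, 1 <= t k)
  (tS : forall k, t k.+1 ^+ 2 - t k.+1 = t k ^+ 2)
  (yS : forall k, y k.+1 = x k.+1 + ((t k - 1) / t k.+1) *: (x k.+1 - x k))
  (feasible_l : feasible l) (feasible_x : forall k, feasible (x k))
  (descent : forall k lam, feasible lam ->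
     a * (msq (x k.+1 - y k) / 2 + mdot (y k - lam) (x k.+1 - y k)) - e k
       <= H lam - H (x k.+1)).

Let W k := t k *: y k - (t k - 1) *: x k - l.
Let D k := t k *: x k.+1 - (t k - 1) *: x k - l.

(* [t_k^2] times the convex combination, with weights [1 - 1/t_k] and
   [1/t_k], of [descent] at [lam := x k] and at [lam := l]. *)
Lemma fista_step k :
  t k ^+ 2 * (H (x k.+1) - H l) + a / 2 * msq (D k) <=
  t k * (t k - 1) * (H (x k) - H l) + a / 2 * msq (W k) + t k ^+ 2 * e k.
Proof.
have tk_ge1 := t_ge1 k.
have w_x : 0 <= t k * (t k - 1) by rewrite mulr_ge0 ?subr_ge0 // (le_trans ler01).
have w_l : 0 <= t k by rewrite (le_trans ler01).
have at_x := ler_wpM2l w_x (descent k (feasible_x k)).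
have at_l := ler_wpM2l w_l (descent k feasible_l).
set g := x k.+1 - y k in at_x at_l *.
have -> : D k = W k + t k *: g.
  by apply/matrixP => i j; rewrite /D /W /g !mxE; ring.
rewrite msqD msqZ mdotZr /W !mdotBl !mdotZl.
rewrite !mdotBl in at_x at_l.
nra.
Qed.

Lemma fista_W k : W k.+1 = D k.
Proof.
have tS_neq0 : t k.+1 != 0 by rewrite gt_eqF // (lt_le_trans ltr01).
by apply/matrixP => i j; rewrite /W /D yS !mxE; field.
Qed.

Lemma fista_lyapunov k :
  t k ^+ 2 * (H (x k.+1) - H l) + a / 2 * msq (D k) <=
  a / 2 * msq (y 0 - l) + \sum_(i < k.+1) t i ^+ 2 * e i.
Proof.
elim: k => [|k IH].
  have W0 : W 0 = y 0 - l by apply/matrixP => i j; rewrite /W t0 !mxE; ring.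
  by have := fista_step 0; rewrite W0 big_ord1 t0; lra.
have := fista_step k.+1.
have -> : t k.+1 * (t k.+1 - 1) = t k ^+ 2 by rewrite -(tS k); ring.
by rewrite fista_W big_ord_recr /=; lra.
Qed.

End InexactFista.

Section Tseq.
Variable R : realType.
Local Notation t := (@tseq R 0).

Lemma tseqS k : t k.+1 = (1 + Num.sqrt (1 + 4 * t k ^+ 2)) / 2.
Proof. by rewrite /= mul0r subr0 expr1n. Qed.

Lemma tseq_ge1 k : 1 <= t k.
Proof.
elim: k => [|k IH] //; rewrite tseqS.
have s_ge0 : 0 <= Num.sqrt (1 + 4 * t k ^+ 2) by apply: sqrtr_ge0.
have : Num.sqrt (1 + 4 * t k ^+ 2) ^+ 2 = 1 + 4 * t k ^+ 2 by rewrite sqr_sqrtr; nra.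
nra.
Qed.

Lemma tseq_gt0 k : 0 < t k.
Proof. exact: lt_le_trans ltr01 (tseq_ge1 k). Qed.

Lemma tseq_sqrS k : t k.+1 ^+ 2 - t k.+1 = t k ^+ 2.
Proof.
rewrite tseqS; set s := Num.sqrt _.
have s2 : s ^+ 2 = 1 + 4 * t k ^+ 2 by rewrite sqr_sqrtr //; have := tseq_ge1 k; nra.
have -> : ((1 + s) / 2) ^+ 2 - (1 + s) / 2 = (s ^+ 2 - 1) / 4 by field.
by rewrite s2; field.
Qed.

Lemma tseq_sqr_ge k : k.+1%:R <= t k ^+ 2.
Proof.
elim: k => [|k IH]; first by rewrite expr1n.
by have := tseq_sqrS k; have := tseq_ge1 k.+1; rewrite -natr1; lra.
Qed.

Lemma tseqS_le k : t k.+1 <= t k + 1.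
Proof.
rewrite tseqS; set s := Num.sqrt _; have := tseq_ge1 k => t_ge1.
have s_ge0 : 0 <= s by apply: sqrtr_ge0.
have : s ^+ 2 = 1 + 4 * t k ^+ 2 by rewrite sqr_sqrtr //; nra.
nra.
Qed.

Lemma tseq_le k : t k <= k.+1%:R.
Proof.
elim: k => [|k IH] //.
by have := tseqS_le k; rewrite -natr1; lra.
Qed.

Lemma beta0 k : beta (0 : R) k = (t k - 1) / t k.+1.
Proof. by rewrite /beta mulr0 !subr0 divr1 mulr1. Qed.

Lemma beta0_ge0 k : 0 <= beta (0 : R) k.
Proof. by rewrite beta0 divr_ge0 ?subr_ge0 ?tseq_ge1 ?ltW ?tseq_gt0. Qed.

Lemma beta0_le1 k : beta (0 : R) k <= 1.
Proof.
rewrite beta0 ler_pdivrMr ?tseq_gt0 // mul1r.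
by have := tseq_sqrS k; have := tseq_ge1 k; have := tseq_ge1 k.+1; nra.
Qed.

End Tseq.

Lemma near_div_natS_le (R : realType) (A B : R) : 0 < B ->
  \forall n \near \oo, A / n.+1%:R <= B.
Proof.
move=> B_gt0; exists (Num.truncn (A / B)) => // n /= le_n.
rewrite ler_pdivrMr // mulrC -ler_pdivrMr //.
by apply: ltW; apply: lt_le_trans (truncnS_gt _) _; rewrite ler_nat.
Qed.

Lemma sum_inv_sqr_le (R : realType) k :
  \sum_(i < k) (i.+1%:R ^+ 2 : R)^-1 <= 2 - 2 / k.+1%:R.
Proof.
elim: k => [|k IH]; first by rewrite big_ord0 divr1 subrr.
rewrite big_ord_recr /= -[k.+2]addn1 natrD.
apply: le_trans (lerD IH (lexx _)) _; rewrite -subr_ge0.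
have u_ge1 : 1 <= k.+1%:R :> R by rewrite ler1n.
have -> : 2 - 2 / (k.+1%:R + 1) - (2 - 2 / k.+1%:R + k.+1%:R ^- 2) =
    (k.+1%:R - 1) / (k.+1%:R ^+ 2 * (k.+1%:R + 1)) :> R.
  by field; rewrite !gt_eqF //; lra.
by rewrite divr_ge0 ?mulr_ge0 ?exprn_ge0 //; lra.
Qed.

Section QuadraticMinorant.
Variables (R : realType) (m n : nat) (a : R) (g : 'M[R]_(m, n) -> R).
Hypothesis a_gt0 : 0 < a.

Definition quad_minorant (x y : 'M[R]_(m, n)) (dl : R) : Prop :=
  forall w, g x + a * mdot y (w - x) + a / 2 * msq (w - x) - dl <= g w.

Definition rconj (lam : 'M[R]_(m, n)) : R :=
  sup [set mdot lam w - g w | w in [set: 'M[R]_(m, n)]].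

Variables (x y : 'M[R]_(m, n)) (dl : R).
Hypothesis minorant : quad_minorant x y dl.

(* Young's inequality absorbs the linear term [mdot (lam - a y) (w - x)]
   into the quadratic term of the minorant. *)
Lemma quad_minorant_conj_bound lam w :
  mdot lam w - g w <= mdot lam x - g x + dl + msq (lam - a *: y) / (2 * a).
Proof.
have young := young_mdot (w - x) (lam - a *: y) a_gt0.
have := minorant w.
have -> : mdot lam w = mdot lam x + mdot lam (w - x) by rewrite mdotBr; ring.
have -> : msq (lam - a *: y) / (2 * a) = a^-1 * msq (lam - a *: y) / 2.
  by field; rewrite gt_eqF.
rewrite [mdot (w - x) _]mdotC mdotBl mdotZl in young.
lra.
Qed.

Lemma has_sup_rconj lam : has_sup [set mdot lam w - g w | w in [set: 'M[R]_(m, n)]].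
Proof.
split; first by exists (mdot lam 0 - g 0), 0.
exists (mdot lam x - g x + dl + msq (lam - a *: y) / (2 * a)).
by move=> _ [w _ <-]; apply: quad_minorant_conj_bound.
Qed.

Lemma rconj_ge lam w : mdot lam w - g w <= rconj lam.
Proof. by apply: sup_upper_bound; [exact: has_sup_rconj | exists w]. Qed.

Lemma rconj_le lam :
  rconj lam <= mdot lam x - g x + dl + msq (lam - a *: y) / (2 * a).
Proof.
apply: ge_sup; first by exists (mdot lam 0 - g 0), 0.
by move=> _ [w _ <-]; apply: quad_minorant_conj_bound.
Qed.

End QuadraticMinorant.

(* Bounding the conjugate in [Gap] below by its value at [w]. *)
Lemma Gap_quad_minorant (R : realType) d N (ft : 'I_N -> 'rV[R]_d -> R) nu z j
    x dl : 0 < nu -> (Gap ft nu z j x <= dl%:E)%E ->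
  quad_minorant nu (ft j) x z dl.
Proof.
move=> nu_gt0 gap w; set xi := nu *: (z - x).
have conj_ge : ((dot xi w - gfun ft nu j w)%:E <= conj (gfun ft nu j) xi)%E.
  by apply: ereal_sup_ubound; exists w.
have := le_trans (leeD2l (Eloc ft nu z j x)%:E
   (leeD2r ((2 * nu)^-1 * sqn (xi - nu *: z))%:E conj_ge)) gap.
rewrite -!EFinD lee_fin /Eloc /gfun.
have -> : xi - nu *: z = - (nu *: x) by rewrite /xi scalerBr addrAC subrr add0r.
rewrite !dotE !sqnE msqN msqZ /xi mdotZl mdotBl !mdotBr msqB (mdotC w x).
have -> : (2 * nu)^-1 * (nu ^+ 2 * msq x) = nu / 2 * msq x.
  by field; rewrite gt_eqF.
lra.
Qed.

Section DualFLAnalysis.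
Variables (R : realType) (d N : nat) (h : 'I_N -> 'rV[R]_d -> R).
Variables (alpha gamma : R) (th ze : nat -> 'I_N -> 'rV[R]_d).
Hypotheses (N_gt0 : (0 < N)%N) (alpha_gt0 : 0 < alpha) (gamma_gt0 : 0 < gamma)
  (run : dualfl_run 0 th ze).

Definition tol n : R := (N%:R * alpha * (n.+1%:R `^ (4 + gamma)))^-1.

Hypothesis gap : forall n j, (Gap h alpha (ze n j) j (th n.+1 j) <= (tol n)%:E)%E.

Lemma local_minorant n j : quad_minorant alpha (h j) (th n.+1 j) (ze n j) (tol n).
Proof. exact: Gap_quad_minorant. Qed.

Local Notation Phi j := (rconj (h j)).

Lemma Phi_ge j lam w : mdot lam w - h j w <= Phi j lam.
Proof. exact: (rconj_ge alpha_gt0 (local_minorant 0 j)). Qed.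

(* The dual of minimizing [\sum_j h j (theta_j)] under consensus, scaled by
   [alpha]: minimize [dualH] over [feasible] matrices. *)
Definition feasible (A : 'M[R]_(N, d)) : Prop := \sum_j row j A = 0.

Definition dualH (A : 'M[R]_(N, d)) : R := \sum_j Phi j (alpha *: row j A).

(* DualFL with [rho = 0] is FISTA on [dualH]: [Mu n] is the iterate and
   [Zeta n] the extrapolated point. *)
Definition Zeta n : 'M[R]_(N, d) := \matrix_j ze n j.
Definition Mu n : 'M[R]_(N, d) := \matrix_j (zprev ze n j + avgv (th n) - th n j).
Definition Dev n : 'M[R]_(N, d) := Zeta n - Mu n.+1.

Lemma row_Zeta n j : row j (Zeta n) = ze n j.
Proof. exact: rowK. Qed.

Lemma row_Mu n j : row j (Mu n.+1) = ze n j + avgv (th n.+1) - th n.+1 j.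
Proof. exact: rowK. Qed.

Lemma row_Dev n j : row j (Dev n) = th n.+1 j - avgv (th n.+1).
Proof.
rewrite linearB /= row_Zeta row_Mu.
by apply/rowP => i; rewrite !mxE; ring.
Qed.

Lemma Zeta0 : Zeta 0 = 0.
Proof.
have [_ [ze0 _]] := run.
by apply/row_matrixP => j; rewrite row_Zeta ze0 row0.
Qed.

Lemma Mu0 : Mu 0 = 0.
Proof.
have [th0 _] := run.
by apply/row_matrixP => j; rewrite rowK row0 /avgv th0 subr0 big1 ?scaler0 ?addr0.
Qed.

Lemma ZetaS n : Zeta n.+1 = (1 + beta 0 n) *: Mu n.+1 - beta 0 n *: Mu n.
Proof.
have [_ [_ zeS]] := run.
by apply/row_matrixP => j; rewrite linearB /= !linearZ /= !rowK zeS scalerN.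
Qed.

Lemma sum_avgv (v : 'I_N -> 'rV[R]_d) : \sum_(j < N) avgv v = \sum_j v j.
Proof.
rewrite sumr_const card_ord /avgv -scaler_nat scalerA mulfV ?scale1r //.
by rewrite pnatr_eq0 -lt0n.
Qed.

Lemma feasible0 : feasible 0.
Proof. by apply: big1 => j _; rewrite row0. Qed.

Lemma feasible_dual n : feasible (Zeta n) /\ feasible (Mu n).
Proof.
have rowsum_Mu k : \sum_j row j (Mu k.+1) = \sum_j row j (Zeta k).
  under eq_bigr do rewrite row_Mu.
  under [RHS]eq_bigr do rewrite row_Zeta.
  by rewrite sumrB big_split /= sum_avgv addrK.
elim: n => [|n [feas_Z feas_M]].
  by rewrite Zeta0 Mu0; split; exact: feasible0.
have feas_MS : feasible (Mu n.+1) by rewrite /feasible rowsum_Mu.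
split=> //; rewrite /feasible ZetaS.
under eq_bigr do rewrite linearB /= !linearZ /= scalerN.
by rewrite sumrB -!scaler_sumr feas_MS feas_M !scaler0 subr0.
Qed.

Lemma feasibleB A B : feasible A -> feasible B -> feasible (A - B).
Proof.
rewrite /feasible => feas_A feas_B.
by under eq_bigr do rewrite linearB; rewrite sumrB feas_A feas_B subr0.
Qed.

(* The common part [avgv (th n.+1)] is orthogonal to feasible directions. *)
Lemma sum_mdot_th n (A : 'M[R]_(N, d)) : feasible A ->
  \sum_j mdot (row j A) (th n.+1 j) = mdot A (Dev n).
Proof.
move=> feas_A; rewrite mdot_rows.
under eq_bigr => j _ do rewrite -[th n.+1 j](subrK (avgv (th n.+1))) mdotDr -row_Dev.
by rewrite big_split /= -mdot_suml feas_A mdot0l addr0.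
Qed.

Lemma sum_msq_row_Dev n : \sum_j msq (row j (Dev n)) = msq (Dev n).
Proof. by rewrite /msq mdot_rows. Qed.

Lemma Phi_Mu_le n j :
  Phi j (alpha *: row j (Mu n.+1)) <= alpha * mdot (row j (Mu n.+1)) (th n.+1 j)
    - h j (th n.+1 j) + tol n + alpha / 2 * msq (row j (Dev n)).
Proof.
apply: le_trans (rconj_le alpha_gt0 (local_minorant n j) _) _.
have -> : alpha *: row j (Mu n.+1) - alpha *: ze n j = - alpha *: row j (Dev n).
  by rewrite /Dev linearB /= row_Zeta scaleNr -scalerN opprB scalerBr.
have -> : msq (- alpha *: row j (Dev n)) / (2 * alpha) = alpha / 2 * msq (row j (Dev n)).
  by rewrite msqZ sqrrN; field; rewrite gt_eqF.
by rewrite mdotZl.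
Qed.

Lemma dual_descent n lam : feasible lam ->
  alpha * (msq (Mu n.+1 - Zeta n) / 2 + mdot (Zeta n - lam) (Mu n.+1 - Zeta n))
   - N%:R * tol n <= dualH lam - dualH (Mu n.+1).
Proof.
move=> feas_lam.
have feas_B := feasibleB feas_lam (proj2 (feasible_dual n.+1)).
have step j : alpha * mdot (row j (lam - Mu n.+1)) (th n.+1 j) - tol n
    - alpha / 2 * msq (row j (Dev n))
    <= Phi j (alpha *: row j lam) - Phi j (alpha *: row j (Mu n.+1)).
  have := Phi_ge j (alpha *: row j lam) (th n.+1 j).
  have := Phi_Mu_le n j.
  by rewrite [row j (lam - _)]linearB /= mdotBl mdotZl; lra.
rewrite /dualH -sumrB; apply: le_trans _ (ler_sum _ (fun j _ => step j)).
rewrite !sumrB -!mulr_sumr sum_mdot_th // sum_msq_row_Dev sumr_const card_ord.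
rewrite -mulr_natl /Dev /msq !mdotBl !mdotBr.
rewrite ?(mdotC (Zeta n) (Mu n.+1)) ?(mdotC (Mu n.+1) lam) ?(mdotC (Zeta n) lam).
lra.
Qed.

Local Notation t := (@tseq R 0).

Lemma tseq_sqr_Ntol_le n : t n ^+ 2 * (N%:R * tol n) <= (alpha * n.+1%:R ^+ 2)^-1.
Proof.
set u : R := n.+1%:R; have u_ge1 : 1 <= u by rewrite ler1n.
have u4_le : u ^+ 4 <= u `^ (4 + gamma).
  rewrite -powR_mulrn; last lra.
  by apply: ler_powR => //; rewrite lerDl ltW.
have -> : N%:R * tol n = (alpha * u `^ (4 + gamma))^-1.
  by rewrite /tol; field; rewrite !gt_eqF ?powR_gt0 ?ltr0n.
have -> : (alpha * u ^+ 2)^-1 = u ^+ 2 * (alpha * u ^+ 4)^-1.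
  by field; rewrite !gt_eqF //; lra.
have t_le := tseq_le R n; have t_ge1 := tseq_ge1 R n; rewrite -/u in t_le.
apply: ler_pM; first exact: sqr_ge0.
- by rewrite invr_ge0 mulr_ge0 ?powR_ge0 // ltW.
- by nra.
by rewrite lef_pV2 ?posrE ?mulr_gt0 ?exprn_gt0 ?powR_gt0 ?ler_pM2l //; lra.
Qed.

Lemma weighted_tol_sum k : \sum_(i < k) t i ^+ 2 * (N%:R * tol i) <= 2 / alpha.
Proof.
apply: le_trans (_ : _ <= \sum_(i < k) alpha^-1 * (i.+1%:R ^+ 2)^-1) _.
  by apply: ler_sum => i _; rewrite -invfM; exact: tseq_sqr_Ntol_le.
rewrite -mulr_sumr mulrC ler_pM2r ?invr_gt0 //.
apply: le_trans (sum_inv_sqr_le R k) _.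
by rewrite gerBl divr_ge0.
Qed.

Lemma Ntol_le n : N%:R * tol n <= alpha^-1 / n.+1%:R.
Proof.
have Ntol_ge0 : 0 <= N%:R * tol n.
  by rewrite mulr_ge0 ?invr_ge0 ?mulr_ge0 ?powR_ge0 ?ler0n // ltW.
have t_ge1 := tseq_ge1 R n; have u_ge1 : 1 <= n.+1%:R :> R by rewrite ler1n.
apply: le_trans (_ : _ <= t n ^+ 2 * (N%:R * tol n)) _.
  by rewrite ler_peMl //; nra.
apply: le_trans (tseq_sqr_Ntol_le n) _.
by rewrite invfM ler_pM2l ?invr_gt0 // lef_pV2 ?posrE ?exprn_gt0 ?ltr0n //; nra.
Qed.

Definition Mu_aux k : 'M[R]_(N, d) := t k *: Mu k.+1 - (t k - 1) *: Mu k.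

Lemma ZetaS_tseq k : Zeta k.+1 = Mu k.+1 + ((t k - 1) / t k.+1) *: (Mu k.+1 - Mu k).
Proof. by rewrite ZetaS beta0; apply/matrixP => i j; rewrite !mxE; ring. Qed.

Lemma dual_lyapunov k l : feasible l ->
  t k ^+ 2 * (dualH (Mu k.+1) - dualH l) + alpha / 2 * msq (Mu_aux k - l)
   <= alpha / 2 * msq l + 2 / alpha.
Proof.
move=> feas_l.
have := fista_lyapunov (erefl : t 0 = 1) (@tseq_ge1 R) (@tseq_sqrS R) ZetaS_tseq feas_l
  (fun k => proj2 (feasible_dual k)) (@dual_descent) k.
rewrite Zeta0 sub0r msqN => lyap; apply: le_trans lyap _.
by rewrite lerD2l weighted_tol_sum.
Qed.

Lemma Phi_ge_norm0 j lam : - `|h j 0| <= Phi j lam.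
Proof.
apply: le_trans (Phi_ge j lam 0); rewrite mdot0r sub0r lerN2; exact: ler_norm.
Qed.

Local Notation dual_values := [set dualH A | A in feasible].

Lemma has_inf_dual : has_inf dual_values.
Proof.
split; first by exists (dualH 0), 0 => //; exact: feasible0.
exists (- \sum_j `|h j 0|) => _ [A _ <-].
by rewrite -sumrN; apply: ler_sum => j _; apply: Phi_ge_norm0.
Qed.

Lemma dual_inf_le A : feasible A -> inf dual_values <= dualH A.
Proof. by move=> feas_A; apply: ge_inf; [case: has_inf_dual | exists A]. Qed.

Lemma mdot_delta (u : 'rV[R]_d) i : mdot u (delta_mx 0 i) = u 0 i.
Proof.
rewrite /mdot big_ord1 (bigD1 i) //= big1 => [|k /negbTE k_neq_i].
  by rewrite mxE !eqxx mulr1 addr0.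
by rewrite mxE k_neq_i andbF mulr0.
Qed.

Local Notation probe j i := (`|h j (delta_mx 0 i)| + `|h j (- delta_mx 0 i)|).

(* Testing [Phi j] against the points [+- delta_mx 0 i]. *)
Lemma Phi_ge_coord j (u : 'rV[R]_d) i :
  alpha * `|u 0 i| <= Phi j (alpha *: u) + probe j i.
Proof.
have at_plus := Phi_ge j (alpha *: u) (delta_mx 0 i).
have at_minus := Phi_ge j (alpha *: u) (- delta_mx 0 i).
rewrite mdotNr !mdotZl mdot_delta in at_plus at_minus.
have := ler_norm (h j (delta_mx 0 i)); have := ler_norm (h j (- delta_mx 0 i)).
have := normr_ge0 (h j (delta_mx 0 i)); have := normr_ge0 (h j (- delta_mx 0 i)).
by case: (lerP 0 (u 0 i)) => [/ger0_norm|/ltr0_norm] ->; lra.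
Qed.

Definition dual_offset : R := \sum_j (`|h j 0| + \sum_i probe j i).

Lemma dual_entry_le (A : 'M[R]_(N, d)) j i : alpha * `|A j i| <= dualH A + dual_offset.
Proof.
have hc_ge0 k i' : 0 <= probe k i' by rewrite addr_ge0.
rewrite /dualH /dual_offset -big_split /=.
apply: le_trans (ler_sum_term j _) => [|k]; last first.
  have : 0 <= \sum_i probe k i by apply: sumr_ge0 => i' _; exact: hc_ge0.
  by have := Phi_ge_norm0 k (alpha *: row k A); lra.
have := Phi_ge_coord j (row j A) i; rewrite mxE.
have := ler_sum_term i (hc_ge0 j); have := normr_ge0 (h j 0); lra.
Qed.

Definition level_radius : R := ((dualH 0 + 1 + dual_offset) / alpha) ^+ 2 *+ d *+ N.

Lemma dual_level_bounded A : dualH A <= dualH 0 + 1 -> msq A <= level_radius.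
Proof.
move=> level_A; set B := (dualH 0 + 1 + dual_offset) / alpha.
have -> : level_radius = \sum_(j < N) \sum_(i < d) B ^+ 2.
  by rewrite !sumr_const !card_ord.
apply: ler_sum => j _; apply: ler_sum => i _.
have entry_le : `|A j i| <= B.
  by rewrite ler_pdivlMr // mulrC; have := dual_entry_le A j i; lra.
rewrite -expr2 -real_normK ?num_real //.
by have := normr_ge0 (A j i); nra.
Qed.

Definition Kdual : R := 4 * level_radius + 4 / alpha * (2 / alpha + 1).

(* Compare with a feasible [l] that is [t_k^-2]-optimal and lies in the
   level set of [dualH 0]. *)
Lemma Mu_aux_bounded k : msq (Mu_aux k) <= Kdual.
Proof.
have t_ge1 := tseq_ge1 R k.
have t2_gt0 : 0 < t k ^+ 2 by rewrite exprn_gt0 // tseq_gt0.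
have tinv_gt0 : 0 < (t k ^+ 2)^-1 by rewrite invr_gt0.
have [_ [l feas_l <-] near_inf] := inf_adherent tinv_gt0 has_inf_dual.
have le_Mu := dual_inf_le (proj2 (feasible_dual k.+1)).
have le_0 := dual_inf_le feasible0.
have tinv_le1 : (t k ^+ 2)^-1 <= 1 by rewrite invf_le1 //; nra.
have l_bounded : msq l <= level_radius by apply: dual_level_bounded; lra.
have gap_ge : -1 <= t k ^+ 2 * (dualH (Mu k.+1) - dualH l).
  by rewrite -(mulfV (lt0r_neq0 t2_gt0)) -mulrN ler_pM2l //; lra.
have lyap := dual_lyapunov k feas_l.
have V_le : msq (Mu_aux k - l) <= msq l + 2 / alpha * (2 / alpha + 1).
  rewrite -(ler_pM2l (_ : 0 < alpha / 2)) ?divr_gt0 //.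
  have -> : alpha / 2 * (msq l + 2 / alpha * (2 / alpha + 1)) =
      alpha / 2 * msq l + (2 / alpha + 1) by field; rewrite gt_eqF.
  move: lyap gap_ge; set T := t k ^+ 2 * _; lra.
by have := msqD_le (Mu_aux k - l) l; rewrite subrK /Kdual; lra.
Qed.

Lemma Kdual_ge0 : 0 <= Kdual.
Proof. exact: le_trans (msq_ge0 _) (Mu_aux_bounded 0). Qed.

Lemma Mu_convex k : Mu k.+1 = (t k)^-1 *: Mu_aux k + (1 - (t k)^-1) *: Mu k.
Proof.
have := tseq_gt0 R k => t_gt0.
rewrite /Mu_aux; move: (Mu k.+1) (Mu k) => A B.
by apply/matrixP => i j; rewrite !mxE; field; rewrite gt_eqF.
Qed.

Lemma Mu_bounded k : msq (Mu k) <= Kdual.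
Proof.
elim: k => [|k IH]; first by rewrite Mu0 msq0 Kdual_ge0.
have t_ge1 := tseq_ge1 R k.
have s_ge0 : 0 <= (t k)^-1 by rewrite invr_ge0 ltW ?tseq_gt0.
have s_le1 : (t k)^-1 <= 1 by rewrite invf_le1 ?tseq_gt0.
have s01 : 0 <= (t k)^-1 <= 1 by rewrite s_ge0 s_le1.
rewrite Mu_convex; apply: le_trans (msq_convex _ _ s01) _.
by have := Mu_aux_bounded k; nra.
Qed.

Lemma Mu_step_bounded k : msq (Mu k.+1 - Mu k) <= 4 * Kdual / k.+1%:R.
Proof.
have t_gt0 := tseq_gt0 R k; have t2_ge := tseq_sqr_ge R k.
have -> : Mu k.+1 - Mu k = (t k)^-1 *: (Mu_aux k - Mu k).
  rewrite /Mu_aux; move: (Mu k.+1) (Mu k) => A B.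
  by apply/matrixP => i j; rewrite !mxE; field; rewrite gt_eqF.
have VM_le : msq (Mu_aux k - Mu k) <= 4 * Kdual.
  have := msqB_le (Mu_aux k) (Mu k).
  by have := Mu_aux_bounded k; have := Mu_bounded k; lra.
have tinv_le : (t k ^+ 2)^-1 <= k.+1%:R^-1.
  by rewrite lef_pV2 ?posrE ?exprn_gt0 ?ltr0n.
rewrite msqZ exprVn [_ / _]mulrC.
by apply: ler_pM; rewrite ?invr_ge0 ?exprn_ge0 ?msq_ge0 // ltW.
Qed.

Lemma Dev_bounded n : msq (Dev n) <= 24 * Kdual / n.+1%:R.
Proof.
have K_ge0 := Kdual_ge0.
case: n => [|k].
  have := Mu_step_bounded 0.
  by rewrite /Dev Zeta0 Mu0 sub0r subr0 msqN !divr1; lra.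
have -> : Dev k.+1 = beta 0 k *: (Mu k.+1 - Mu k) - (Mu k.+2 - Mu k.+1).
  rewrite /Dev ZetaS; move: (Mu k.+2) (Mu k.+1) (Mu k) => A B C.
  by apply/matrixP => i j; rewrite !mxE; ring.
apply: le_trans (msqB_le _ _) _; rewrite msqZ.
have b_ge0 := beta0_ge0 R k; have b_le1 := beta0_le1 R k.
have step1 := Mu_step_bounded k; have step2 := Mu_step_bounded k.+1.
have X_ge0 := msq_ge0 (Mu k.+1 - Mu k).
have u_ge1 : 1 <= k.+1%:R :> R by rewrite ler1n.
have halve : 4 * Kdual / k.+1%:R <= 8 * (Kdual / k.+2%:R).
  rewrite -subr_ge0 -[k.+2]addn1 natrD.
  have -> : 8 * (Kdual / (k.+1%:R + 1)) - 4 * Kdual / k.+1%:R =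
      4 * Kdual * (k.+1%:R - 1) / (k.+1%:R * (k.+1%:R + 1)) :> R.
    by field; rewrite !gt_eqF //; lra.
  by rewrite divr_ge0 ?mulr_ge0 //; lra.
have -> : 24 * Kdual / k.+2%:R = 24 * (Kdual / k.+2%:R) by rewrite mulrA.
rewrite -(mulrA 4) in step2.
set w := Kdual / k.+2%:R in halve step2 *.
have bX := ler_piMl X_ge0 (exprn_ile1 2 b_ge0 b_le1).
move: step1 halve; set q := 4 * Kdual / _; lra.
Qed.

Lemma Dev_vanishes s : 0 < s -> \forall n \near \oo, msq (Dev n) <= s.
Proof.
move=> s_gt0; apply: filterS (near_div_natS_le (24 * Kdual) s_gt0) => n.
exact: le_trans (Dev_bounded n).
Qed.

Definition residual n : R :=
  alpha * mdot (Mu n.+1) (Dev n) + alpha / 2 * msq (Dev n) + N%:R * tol n.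

(* Weak duality at the dual feasible point [Mu n.+1]. *)
Lemma primal_bound n x : \sum_j h j (th n.+1 j) <= \sum_j h j x + residual n.
Proof.
have feas_Mu := proj2 (feasible_dual n.+1).
have lower : - \sum_j h j x <= dualH (Mu n.+1).
  apply: le_trans _ (ler_sum _ (fun j _ => Phi_ge j (alpha *: row j (Mu n.+1)) x)).
  by rewrite sumrB -mdot_suml -scaler_sumr feas_Mu scaler0 mdot0l sub0r.
have upper : dualH (Mu n.+1) <= \sum_j (alpha * mdot (row j (Mu n.+1)) (th n.+1 j)
    - h j (th n.+1 j) + tol n + alpha / 2 * msq (row j (Dev n))).
  by apply: ler_sum => j _; exact: Phi_Mu_le.
rewrite !big_split /= sumrN -!mulr_sumr sum_mdot_th // sum_msq_row_Dev in upper.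
rewrite sumr_const card_ord -mulr_natl in upper.
by rewrite /residual; lra.
Qed.

Lemma residual_le n c : 0 < c ->
  residual n <= alpha / 2 * (c * Kdual) +
    (alpha / 2 * (c^-1 + 1) * (24 * Kdual) + alpha^-1) / n.+1%:R.
Proof.
move=> c_gt0; set D := 24 * Kdual / n.+1%:R.
have a2_ge0 : 0 <= alpha / 2 by rewrite divr_ge0 // ltW.
have cross : alpha * mdot (Mu n.+1) (Dev n) <= alpha / 2 * (c * Kdual + c^-1 * D).
  have -> : alpha * mdot (Mu n.+1) (Dev n) = alpha / 2 * (2 * mdot (Mu n.+1) (Dev n)).
    by field.
  apply: ler_wpM2l => //; apply: le_trans (young_mdot _ _ c_gt0) _.
  apply: lerD; apply: ler_wpM2l.
  - exact: ltW.
  - exact: Mu_bounded.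
  - by rewrite invr_ge0 ltW.
  - exact: Dev_bounded.
have square : alpha / 2 * msq (Dev n) <= alpha / 2 * D.
  by rewrite ler_wpM2l //; exact: Dev_bounded.
have := Ntol_le n.
have -> : alpha / 2 * (c * Kdual)
      + (alpha / 2 * (c^-1 + 1) * (24 * Kdual) + alpha^-1) / n.+1%:R
    = alpha / 2 * (c * Kdual + c^-1 * D) + alpha / 2 * D + alpha^-1 / n.+1%:R.
  by rewrite /D; field; rewrite !gt_eqF ?ltr0n.
rewrite /residual; set T := N%:R * tol n; set U := alpha^-1 / n.+1%:R.
lra.
Qed.

Lemma residual_vanishes eps : 0 < eps -> \forall n \near \oo, residual n <= eps.
Proof.
move=> eps_gt0; have K_ge0 := Kdual_ge0.
set c := eps / (alpha * (Kdual + 1)).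
have c_gt0 : 0 < c by rewrite divr_gt0 ?mulr_gt0 //; lra.
have bias_le : alpha / 2 * (c * Kdual) <= eps / 2.
  rewrite /c -subr_ge0.
  have -> : eps / 2 - alpha / 2 * (eps / (alpha * (Kdual + 1)) * Kdual) =
      eps / 2 / (Kdual + 1).
    by field; rewrite !gt_eqF //; lra.
  by rewrite divr_ge0 ?divr_ge0 //; lra.
near=> n; apply: le_trans (residual_le n c_gt0) _.
have : (alpha / 2 * (c^-1 + 1) * (24 * Kdual) + alpha^-1) / n.+1%:R <= eps / 2.
  by near: n; apply: near_div_natS_le; rewrite divr_gt0.
set E := (_ + _) / _; lra.
Unshelve. all: by end_near.
Qed.

Definition iterate_radius (C : R) : R :=
  2 * (2 / alpha * (C - \sum_k h k (th 1 k) + N%:R * tol 0))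
  + 2 * \sum_k msq (th 1 k).

(* The first local step (with [zeta^(0) = 0]) makes every [h j] grow at
   least quadratically away from [th 1 j]. *)
Lemma local_iterates_bounded n C j :
  \sum_k h k (th n.+1 k) <= C -> msq (th n.+1 j) <= iterate_radius C.
Proof.
move=> sum_le; have [_ [ze0 _]] := run.
pose T k := h k (th n.+1 k) - h k (th 1 k) + tol 0.
have T_ge k : alpha / 2 * msq (th n.+1 k - th 1 k) <= T k.
  by have := local_minorant 0 k (th n.+1 k); rewrite ze0 mdot0l mulr0 addr0 /T; lra.
have T_ge0 k : 0 <= T k.
  by apply: le_trans (T_ge k); rewrite mulr_ge0 ?msq_ge0 ?divr_ge0 ?ltW.
have sum_T : \sum_k T k <= C - \sum_k h k (th 1 k) + N%:R * tol 0.
  by rewrite /T !big_split /= sumrN sumr_const card_ord -mulr_natl; lra.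
have dist_le :
    msq (th n.+1 j - th 1 j) <= 2 / alpha * (C - \sum_k h k (th 1 k) + N%:R * tol 0).
  rewrite -(ler_pM2l (_ : 0 < alpha / 2)) ?divr_gt0 // mulrA.
  have -> : alpha / 2 * (2 / alpha) = 1 by field; rewrite gt_eqF.
  by rewrite mul1r; apply: le_trans (T_ge j) (le_trans (ler_sum_term j T_ge0) sum_T).
have := msqD_le (th n.+1 j - th 1 j) (th 1 j); rewrite subrK.
have := ler_sum_term j (fun k => msq_ge0 (th 1 k)).
by rewrite /iterate_radius; lra.
Qed.

End DualFLAnalysis.

Lemma msq_row_le (R : realType) N d (A : 'M[R]_(N, d)) j : msq (row j A) <= msq A.
Proof. by rewrite [msq A]mdot_rows; apply: ler_sum_term => k; apply: msq_ge0. Qed.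

Lemma convex_fun_addsqn (R : realType) d (f : 'rV[R]_d -> R) c :
  0 <= c -> convex_fun f -> convex_fun (fun x => f x + c * sqn x).
Proof.
move=> c_ge0 f_conv x y s s01; rewrite !sqnE.
have := f_conv x y s s01; have := ler_wpM2l c_ge0 (msq_convex x y s01).
by case/andP: s01 => s_ge0 s_le1; nra.
Qed.

(* Convexity along the ray from [x] through [y], stopped at distance
   [|y - x| / s], turns a bound on [|g|] into a modulus of continuity. *)
Lemma convex_bounded_increment (R : realType) d (g : 'rV[R]_d -> R) K M x y s :
  convex_fun g -> (forall w, msq w <= 2 * K + 2 -> `|g w| <= M) ->
  0 < s <= 1 -> msq x <= K -> msq (y - x) <= s ^+ 2 -> g y - g x <= 2 * s * M.
Proof.
move=> g_conv g_bounded /andP[s_gt0 s_le1] x_le step_le.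
set z := x + s^-1 *: (y - x).
have y_conv : y = s *: z + (1 - s) *: x.
  by apply/rowP => k; rewrite /z !mxE; field; rewrite gt_eqF.
have z_le : msq z <= 2 * K + 2.
  apply: le_trans (msqD_le _ _) _; rewrite msqZ exprVn.
  have : (s ^+ 2)^-1 * msq (y - x) <= 1.
    by rewrite ler_pdivrMl ?exprn_gt0 // mulr1.
  lra.
have x_in : msq x <= 2 * K + 2 by have := msq_ge0 x; lra.
have gz_le : g z <= M := le_trans (ler_norm _) (g_bounded z z_le).
have gx_ge : - g x <= M.
  by apply: le_trans (ler_norm _) _; rewrite normrN g_bounded.
have conv_le : g y <= s * g z + (1 - s) * g x.
  by rewrite {1}y_conv; apply: g_conv; rewrite ltW.
have : s * (g z - g x) <= s * (2 * M) by rewrite ler_wpM2l //; [exact: ltW | lra].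
lra.
Qed.

Lemma coord_le_msq (R : realType) d (w : 'rV[R]_d) i : `|w 0 i| ^+ 2 <= msq w.
Proof.
rewrite /msq /mdot big_ord1 real_normK ?num_real // expr2.
by apply: (ler_sum_term i (fun b => _)) => b; rewrite -expr2 sqr_ge0.
Qed.

Lemma continuous_bounded_ball (R : realType) d (g : 'rV[R]_d -> R) K :
  continuous g -> exists M, forall w, msq w <= K -> `|g w| <= M.
Proof.
move=> g_cont; set r := K + 1.
set A := [set v : 'rV[R]_d | forall i, `[- r, r]%classic (v 0 i)].
have A_compact : compact A.
  by apply: (@rV_compact _ _ (fun=> `[- r, r]%classic)) => i; apply: segment_compact.
have := continuous_compact (continuous_subspaceT g_cont) A_compact.
move=> /compact_bounded [M [_ M_bound]].
exists (M + 1) => w w_le; apply: (M_bound (M + 1)); first by rewrite ltrDl.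
exists w => // i; rewrite /= in_itv /= -ler_norml.
by have := coord_le_msq w i; have := normr_ge0 (w 0 i); rewrite /r; nra.
Qed.

Section RegularizedDualFL.
Variables (R : realType) (d N : nat) (f : 'I_N -> 'rV[R]_d -> R).
Variables (alpha gamma : R) (th ze : nat -> 'I_N -> 'rV[R]_d).
Hypotheses (N_gt0 : (0 < N)%N) (f_cont : forall j, continuous (f j))
  (f_conv : forall j, convex_fun (f j)) (alpha_gt0 : 0 < alpha)
  (gamma_gt0 : 0 < gamma) (run : dualfl_run 0 th ze).

Let fa j x := f j x + alpha / 2 * sqn x.

Hypothesis gap : forall n j, (Gap fa alpha (ze n j) j (th n.+1 j)
  <= ((N%:R * alpha * (n.+1%:R `^ (4 + gamma)))^-1)%:E)%E.

Lemma fa_bounded_ball K : exists M, forall j w, msq w <= K -> `|fa j w| <= M.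
Proof.
have [Mf Mf_bound] :=
  fin_all_exists (fun j : 'I_N => continuous_bounded_ball K (@f_cont j)).
exists (\sum_j `|Mf j| + alpha / 2 * `|K|) => j w w_le.
apply: le_trans (ler_normD _ _) _; apply: lerD.
  apply: le_trans (Mf_bound j w w_le) _; apply: le_trans (ler_norm _) _.
  exact: ler_sum_term.
have a2_ge0 : 0 <= alpha / 2 by rewrite divr_ge0 // ltW.
rewrite normrM (ger0_norm a2_ge0) ler_wpM2l // sqnE ger0_norm ?msq_ge0 //.
exact: le_trans w_le (ler_norm K).
Qed.

(* Near consensus and boundedness of the local iterates transfer the primal
   bound from the local iterates to their average. *)
Lemma regularized_convergence x eps : 0 < eps ->
  \forall n \near \oo, \sum_j fa j (avgv (th n.+1)) <= \sum_j fa j x + eps.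
Proof.
move=> eps_gt0.
set K := iterate_radius fa alpha gamma th (\sum_j fa j x + 1).
have [M M_bound] := fa_bounded_ball (2 * K + 2).
set s := (1 + 4 * N%:R * `|M| / eps)^-1.
have q_ge0 : 0 <= 4 * N%:R * `|M| / eps by rewrite divr_ge0 ?mulr_ge0 ?ler0n // ltW.
have s_gt0 : 0 < s by rewrite invr_gt0; lra.
have s_le1 : s <= 1 by rewrite invf_le1; lra.
have sM_le : 2 * s * `|M| * N%:R <= eps / 2.
  have -> : 2 * s * `|M| * N%:R = eps / 2 * (4 * N%:R * `|M| / eps * s).
    by field; rewrite gt_eqF.
  apply: ler_piMr; first by rewrite divr_ge0 // ltW.
  move: q_ge0; rewrite /s; set q := 4 * N%:R * _ / _ => q_ge0.
  by rewrite ler_pdivrMr ?mul1r; lra.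
near=> n.
have res_small : residual alpha gamma th ze n <= eps / 2.
  by near: n; apply: (residual_vanishes N_gt0 alpha_gt0 gamma_gt0 run gap); lra.
have res_le1 : residual alpha gamma th ze n <= 1.
  by near: n; exact: (residual_vanishes N_gt0 alpha_gt0 gamma_gt0 run gap).
have dev_small : msq (Dev th ze n) <= s ^+ 2.
  by near: n; apply: (Dev_vanishes N_gt0 alpha_gt0 gamma_gt0 run gap); rewrite exprn_gt0.
have primal := primal_bound N_gt0 alpha_gt0 run gap n x.
have step j : fa j (avgv (th n.+1)) - fa j (th n.+1 j) <= 2 * s * `|M|.
  apply: (convex_bounded_increment (K := K)).
  - by apply: convex_fun_addsqn; [rewrite divr_ge0 // ltW | exact: f_conv].
  - by move=> w /(M_bound j) /le_trans; apply; rewrite ler_norm.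
  - by rewrite s_gt0 s_le1.
  - by apply: (local_iterates_bounded alpha_gt0 run gap); lra.
  - rewrite -opprB -(row_Dev th ze) msqN.
    exact: le_trans (msq_row_le _ _) dev_small.
have : \sum_j (fa j (avgv (th n.+1)) - fa j (th n.+1 j)) <= \sum_(j < N) 2 * s * `|M|.
  by apply: ler_sum => j _; exact: step.
rewrite sumrB sumr_const card_ord -mulr_natr; lra.
Unshelve. all: by end_near.
Qed.

End RegularizedDualFL.

Lemma avgf_sub_le_of_regularized (R : realType) d N (f : 'I_N -> 'rV[R]_d -> R)
    (c eps : R) x y : (0 < N)%N -> 0 <= c -> c * sqn y <= eps / 2 ->
  \sum_j (f j x + c * sqn x) <= \sum_j (f j y + c * sqn y) + N%:R * (eps / 2) ->
  avgf f x - avgf f y <= eps.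
Proof.
move=> N_gt0 c_ge0 cy_le.
have sum_const (a : R) : \sum_(j < N) a = N%:R * a.
  by rewrite sumr_const card_ord mulr_natl.
rewrite !big_split /= !sum_const.
have N_gt0' : 0 < N%:R :> R by rewrite ltr0n.
have := ler_wpM2l (ltW N_gt0') cy_le.
have := mulr_ge0 (ltW N_gt0') (mulr_ge0 c_ge0 (_ : 0 <= sqn x)).
rewrite sqnE msq_ge0 /avgf -mulrBr [N%:R^-1 * _]mulrC ler_pdivrMr //.
lra.
Qed.

Unset Implicit Arguments.
Set Strict Implicit.
Set Printing Implicit Defensive.

Theorem theorem4p1 (R : realType) (d N : nat) (f : 'I_N -> 'rV[R]_d -> R)
    (thstar : 'rV[R]_d) :
  (0 < N)%N ->
  (forall j, continuous (f j)) ->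
  (forall j, convex_fun (f j)) ->
  coercive (avgf f) ->
  (forall x, avgf f thstar <= avgf f x) ->
  forall eps : R, 0 < eps ->
  exists alpha0 : R, 0 < alpha0 /\
  forall alpha : R, 0 < alpha -> alpha < alpha0 ->
  forall th ze : nat -> 'I_N -> 'rV[R]_d,
    let fa := fun (j : 'I_N) (x : 'rV[R]_d) => f j x + alpha / 2 * sqn x in
    dualfl_run 0 th ze ->
    (exists gamma : R, 0 < gamma /\
       forall (n : nat) (j : 'I_N),
         (Gap fa alpha (ze n j) j (th n.+1 j)
           <= ((N%:R * alpha * (n.+1%:R `^ (4 + gamma)))^-1)%:E)%E) ->
    exists n0 : nat, forall n : nat, (n0 <= n)%N ->
      avgf f (avgv (th n)) - avgf f thstar <= eps.
Proof.
move=> N_gt0 f_cont f_conv _ _ eps eps_gt0.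
have sqn_ge0 : 0 <= sqn thstar by rewrite sqnE msq_ge0.
exists (eps / (sqn thstar + 1)); split; first by rewrite divr_gt0 //; lra.
move=> alpha alpha_gt0 alpha_lt th ze fa run [gamma [gamma_gt0 gap]].
have reg_le : alpha / 2 * sqn thstar <= eps / 2.
  by rewrite ltr_pdivlMr in alpha_lt; nra.
have Neps_gt0 : 0 < N%:R * (eps / 2) by rewrite mulr_gt0 ?ltr0n ?divr_gt0.
have [n0 _ conv] := regularized_convergence N_gt0 f_cont f_conv alpha_gt0
  gamma_gt0 run gap thstar Neps_gt0.
exists n0.+1 => -[//|n] le_n.
apply: avgf_sub_le_of_regularized N_gt0 _ reg_le (conv n le_n).
by rewrite divr_ge0 ?ltW.
Qed.
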